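(* For every permutation $\sigma$ and every Cayley permutation $y$, $$\mathcal{S}(\sigma)=\gamma\bigl(X[\sigma^{-1}]\bigr)\qquad\text{and}\qquad\gamma\bigl(X[y]\bigr)=\mathcal{S}\bigl(\gamma(y)\bigr).$$
   Context: A Cayley permutation of length $n$ is a word of positive integers in which every integer from $1$ to its maximum occurs. Containment $y\le x$: indices $i_1<\dots<i_k$ ($k$ the length of $y$) with $x(i_s)<x(i_t)\iff y(s)<y(t)$ and $x(i_s)=x(i_t)\iff y(s)=y(t)$; otherwise $x$ avoids $y$. $\mathcal{S}$ is the set of permutations, $\mathcal{S}(\tau)$ those avoiding $\tau$. For $x$ of length $n$, $\gamma(x)$ is the permutation obtained by sorting the pairs $(x(i),i)$ increasingly by first coordinate, ties by decreasing second coordinate, and reading the second coordinates; $\gamma(E)=\{\gamma(x):x\in E\}$. $x\sim y$ iff $\gamma(x)=\gamma(y)$, $[y]$ is the class of $y$, and $E[y]$ is the set of elements of $E$ avoiding every element of $[y]$. The map $\eta$: for $\pi\in\mathcal{S}_n$ and $i\in[n]$, let $J(i)=0$ if $\pi(i)=1$ and otherwise let $J(i)$ be the index with $\pi(J(i))=\pi(i)-1$. The sites of $\pi$ are the site before $\pi(1)$ and the site after $\pi(i)$ for each $i\in[n]$. The site before $\pi(1)$ is $\eta$-active; the site after $\pi(i)$ is $\eta$-active iff $J(i)<i$, or $i<n$ and $\pi(i)<\pi(i+1)$. Define $\tilde\upsilon(\pi)(j)$ to be the number of $\eta$-active sites to the left of $\pi(j)$ (so consecutive active sites are numbered $1,2,\dots$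 and entries between active sites $k$ and $k+1$ get label $k$). Then $\eta(\pi)$ is the word of length $n$ with $\eta(\pi)(\pi(j))=\tilde\upsilon(\pi)(j)$ for all $j$, i.e. $\eta(\pi)=\tilde\upsilon(\pi)\circ\pi^{-1}$. Let $X=\eta(\mathcal{S})$. *)

From mathcomp Require Import all_boot.
Set Implicit Arguments. Unset Strict Implicit. Unset Printing Implicit Defensive.

(* Words are seq nat; position i (1-based) of x is nth 0 x (i-1). *)

Definition is_cayley (x : seq nat) : bool :=
  all (fun v => 0 < v) x && all (fun k => k \in x) (iota 1 (foldr maxn 0 x)).

Definition is_perm (x : seq nat) : bool := is_cayley x && uniq x.

Definition order_iso (z y : seq nat) : bool :=
  (size z == size y) &&
  [forall s : 'I_(size y), forall t : 'I_(size y),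
     ((nth 0 z s < nth 0 z t) == (nth 0 y s < nth 0 y t)) &&
     ((nth 0 z s == nth 0 z t) == (nth 0 y s == nth 0 y t))].

Definition contains (x y : seq nat) : Prop :=
  exists z : seq nat, subseq z x /\ order_iso z y.
Definition avoids (x y : seq nat) : Prop := ~ contains x y.

Definition Sav (tau : seq nat) (p : seq nat) : Prop := is_perm p /\ avoids p tau.

Definition gamma_le (a b : nat * nat) : bool :=
  (a.1 < b.1) || ((a.1 == b.1) && (b.2 <= a.2)).
Definition gamma (x : seq nat) : seq nat :=
  map snd (sort gamma_le (zip x (iota 1 (size x)))).

Definition perm_inv (s : seq nat) : seq nat :=
  [seq (index v s).+1 | v <- iota 1 (size s)].

Section Eta.
Variable p : seq nat.
Let n := size p.
Let pi (i : nat) := nth 0 p i.-1.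
Definition etaJ (i : nat) : nat :=
  if pi i == 1 then 0 else (index (pi i).-1 p).+1.
(* the site after pi(i) is eta-active *)
Definition eta_active (i : nat) : bool :=
  (etaJ i < i) || ((i < n) && (pi i < pi i.+1)).
(* number of eta-active sites to the left of pi(j): the site before pi(1)
   plus the active sites after pi(i), 1 <= i < j *)
Definition upsilon (j : nat) : nat := 1 + count eta_active (iota 1 j.-1).
Definition eta : seq nat := [seq upsilon (index v p).+1 | v <- iota 1 n].
End Eta.

Definition inX (w : seq nat) : Prop := exists p, is_perm p /\ eta p = w.

(* E[y] for E = X: elements of X avoiding every element of the class [y]
   (Cayley permutations x with gamma x = gamma y). *)
Definition Xbr (y : seq nat) (w : seq nat) : Prop :=
  inX w /\ forall x, is_cayley x -> gamma x = gamma y -> avoids w x.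

Definition gamma_img (E : seq nat -> Prop) (p : seq nat) : Prop :=
  exists w, E w /\ gamma w = p.

From mathcomp Require Import all_boot zify.
Set Implicit Arguments. Unset Strict Implicit. Unset Printing Implicit Defensive.

(* gamma w lists the positions of w sorted by value, ties from right to left.
   Restricting w to a set of positions restricts gamma w to the same positions,
   relabelled increasingly, and order-isomorphic words have the same gamma.
   Hence an occurrence of x in w gives an occurrence of gamma x in gamma w;
   conversely an occurrence of gamma y in gamma w, read as a set of positions
   of w, cuts out a subword z with gamma z = gamma y, and the standardisation
   of z is a Cayley permutation of the class [y] contained in w.  Moreover
   gamma (eta pi) = pi, because the value of eta pi at pi(j) is nondecreasing
   in j and stays constant only at descents of pi.  This gives
   gamma(X[y]) = S(gamma y), and the first identity is the case
   y = sigma^-1, since gamma(sigma^-1) = sigma. *)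

Definition gamma_ord (w : seq nat) : rel nat := fun i j =>
  (nth 0 w i < nth 0 w j) || ((nth 0 w i == nth 0 w j) && (j <= i)).

Lemma gamma_ord_total w : total (gamma_ord w).
Proof. move=> i j; rewrite /gamma_ord; lia. Qed.

Lemma gamma_ord_trans w : transitive (gamma_ord w).
Proof. move=> j i k; rewrite /gamma_ord; lia. Qed.

Lemma gamma_ord_anti w : antisymmetric (gamma_ord w).
Proof. move=> i j; rewrite /gamma_ord; lia. Qed.

Lemma gammaE w : gamma w = map S (sort (gamma_ord w) (iota 0 (size w))).
Proof.
rewrite /gamma.
have -> : zip w (iota 1 (size w)) = map (fun i => (nth 0 w i, i.+1)) (iota 0 (size w)).
  apply: (@eq_from_nth _ (0, 0)) => [|i]; rewrite size_zip ?size_map !size_iota ?minnn //.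
  by move=> lt_i; rewrite nth_zip ?size_iota // (nth_map 0) ?size_iota // !nth_iota.
by rewrite sort_map -map_comp.
Qed.

Lemma sort_gamma_ord_map u w f s :
  {in s &, {mono f : i j / gamma_ord u i j >-> gamma_ord w i j}} ->
  sort (gamma_ord w) (map f s) = map f (sort (gamma_ord u) s).
Proof.
move=> f_mono; apply: (@homo_sort_map_in _ _ (mem s)); last exact: allss.
- move=> i j si sj /andP[] /=; rewrite !f_mono // => uij uji.
  by apply: (@gamma_ord_anti u); rewrite uij uji.
- by move=> j i k sj si sk /=; rewrite !f_mono //; exact: gamma_ord_trans.
- by move=> i j _ _; exact: gamma_ord_total.
- by move=> i j si sj; rewrite f_mono.
Qed.

Lemma foldr_maxn_leq s n : (foldr maxn 0 s <= n) = all (leq^~ n) s.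
Proof. by elim: s => //= a s IH; rewrite geq_max IH. Qed.

Lemma is_permP s : reflect (perm_eq s (iota 1 (size s))) (is_perm s).
Proof.
apply: (iffP idP) => [/andP[/andP[/allP s_pos /allP s_onto] s_uniq] | s_perm].
  have max_s : perm_eq s (iota 1 (foldr maxn 0 s)).
    apply: uniq_perm => //; first exact: iota_uniq.
    move=> v; apply/idP/idP => [sv | /s_onto //].
    have := leqnn (foldr maxn 0 s); rewrite foldr_maxn_leq => /allP/(_ v sv).
    by rewrite mem_iota; have := s_pos v sv; lia.
  by rewrite (perm_size max_s) size_iota.
have mem_s v : (v \in s) = (0 < v <= size s) by rewrite (perm_mem s_perm) mem_iota; lia.
rewrite /is_perm /is_cayley (perm_uniq s_perm) iota_uniq andbT.
have max_le : foldr maxn 0 s <= size s.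
  by rewrite foldr_maxn_leq; apply/allP => v; rewrite mem_s; lia.
apply/andP; split; apply/allP => v; rewrite ?mem_iota mem_s; lia.
Qed.

Lemma iota1E n : iota 1 n = map S (iota 0 n).
Proof. exact: (iotaDl 1 0). Qed.

Lemma gamma_perm w : perm_eq (gamma w) (iota 1 (size w)).
Proof. by rewrite gammaE iota1E perm_map // perm_sort. Qed.

Lemma size_gamma w : size (gamma w) = size w.
Proof. by rewrite (perm_size (gamma_perm w)) size_iota. Qed.

Lemma mem_gamma w v : (v \in gamma w) = (0 < v <= size w).
Proof. by rewrite (perm_mem (gamma_perm w)) mem_iota add1n ltnS. Qed.

Lemma gamma_is_perm w : is_perm (gamma w).
Proof. by apply/is_permP; rewrite size_gamma gamma_perm. Qed.

Lemma eqn_from_ltn a b c d : (a < b) = (c < d) -> (b < a) = (d < c) -> (a == b) = (c == d).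
Proof. lia. Qed.

Definition lt_iso (z y : seq nat) : Prop := size z = size y /\
  forall s t, s < size y -> t < size y ->
    (nth 0 z s < nth 0 z t) = (nth 0 y s < nth 0 y t).

Lemma order_isoP z y : reflect (lt_iso z y) (order_iso z y).
Proof.
apply: (iffP andP) => [[/eqP zy /forallP z_iso] | [zy z_iso]].
  split=> // s t lt_s lt_t.
  by have /forallP/(_ (Ordinal lt_t))/andP[/eqP] := z_iso (Ordinal lt_s).
split; first exact/eqP.
apply/forallP => s; apply/forallP => t; apply/andP; split; apply/eqP; first exact: z_iso.
by apply: eqn_from_ltn; apply: z_iso.
Qed.

Lemma lt_iso_refl s : lt_iso s s.
Proof. by []. Qed.

Lemma lt_iso_sym z y : lt_iso z y -> lt_iso y z.
Proof. by case=> zy z_iso; split=> // s t; rewrite zy => lt_s lt_t; rewrite z_iso. Qed.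

Lemma lt_iso_map h s t : {in s &, {mono h : a b / a < b}} ->
  lt_iso (map h s) t <-> lt_iso s t.
Proof.
rewrite /lt_iso size_map => h_mono.
by split=> -[st s_iso]; split=> // a b lt_a lt_b;
  rewrite -s_iso // !(nth_map 0) ?st // h_mono // mem_nth ?st.
Qed.

Lemma gamma_lt_iso z x : lt_iso z x -> gamma z = gamma x.
Proof.
case=> zx z_iso; rewrite !gammaE zx -[in RHS](map_id (iota 0 _)).
rewrite (@sort_gamma_ord_map z x id) ?map_id // => i j; rewrite !mem_iota /= => lt_i lt_j.
by rewrite /gamma_ord z_iso // (eqn_from_ltn (z_iso i j lt_i lt_j) (z_iso j i lt_j lt_i)).
Qed.

Lemma count_ltn_iota1 v k : 0 < v <= k.+1 -> count (ltn^~ v) (iota 1 k) = v.-1.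
Proof.
move=> v_range; have := @filter_iota_ltn 1 k v.-1; rewrite add1n prednK; last by lia.
by rewrite -size_filter => ->; rewrite ?size_iota //; lia.
Qed.

Lemma perm_rank r k i : perm_eq r (iota 1 k) -> i < k ->
  nth 0 r i = (count (fun j => nth 0 r j < nth 0 r i) (iota 0 k)).+1.
Proof.
move=> r_perm lt_i; have size_r : size r = k by rewrite (perm_size r_perm) size_iota.
have := mem_nth 0 (_ : i < size r); rewrite size_r (perm_mem r_perm) mem_iota => /(_ lt_i).
set v := nth 0 r i => v_range.
rewrite -(@count_map _ _ (nth 0 r) (ltn^~ v)) -size_r map_nth_iota0 // take_size.
by rewrite (permP r_perm) count_ltn_iota1; lia.
Qed.

Lemma perm_lt_iso_eq p q k : perm_eq p (iota 1 k) -> perm_eq q (iota 1 k) ->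
  lt_iso p q -> p = q.
Proof.
move=> p_perm q_perm [pq pq_iso]; have size_q : size q = k.
  by rewrite (perm_size q_perm) size_iota.
apply: (@eq_from_nth _ 0) => [//|i]; rewrite pq size_q => lt_i.
rewrite (perm_rank p_perm) // (perm_rank q_perm) //; congr S.
by apply: eq_in_count => j; rewrite mem_iota /= => lt_j; rewrite pq_iso ?size_q.
Qed.

Lemma sorted_nth_leqE s i j : sorted ltn s -> i < size s -> j < size s ->
  (nth 0 s i <= nth 0 s j) = (i <= j).
Proof.
move=> s_sorted lt_i lt_j; apply: (leq_mono_in (D := [pred i | i < size s])) => //.
exact: (sorted_ltn_nth ltn_trans 0 s_sorted).
Qed.

Lemma sorted_nth_ltnE s i j : sorted ltn s -> i < size s -> j < size s ->
  (nth 0 s i < nth 0 s j) = (i < j).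
Proof. by move=> s_sorted lt_i lt_j; rewrite !ltnNge sorted_nth_leqE. Qed.

Definition std (z : seq nat) : seq nat := [seq (index v (sort leq (undup z))).+1 | v <- z].

Lemma std_lt_iso z : lt_iso (std z) z.
Proof.
set u := sort leq (undup z).
have u_sorted : sorted ltn u.
  by rewrite ltn_sorted_uniq_leq sort_uniq undup_uniq sort_sorted //; exact: leq_total.
have mem_u v : (v \in u) = (v \in z) by rewrite mem_sort mem_undup.
rewrite /std -/u; apply/lt_iso_map => [a b za zb|]; last exact: lt_iso_refl.
by rewrite ltnS -(sorted_nth_ltnE u_sorted) ?index_mem ?mem_u // !nth_index ?mem_u.
Qed.

Lemma std_cayley z : is_cayley (std z).
Proof.
set u := sort leq (undup z).
have u_uniq : uniq u by rewrite sort_uniq undup_uniq.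
have mem_u v : (v \in u) = (v \in z) by rewrite mem_sort mem_undup.
apply/andP; split; first by apply/allP => v /mapP[a _ ->].
have max_le : foldr maxn 0 (std z) <= size u.
  by rewrite foldr_maxn_leq; apply/allP => v /mapP[a za ->]; rewrite index_mem mem_u.
apply/allP => k; rewrite mem_iota => k_range; have lt_k : k.-1 < size u by lia.
apply/mapP; exists (nth 0 u k.-1); first by rewrite -mem_u mem_nth.
by rewrite index_uniq //; lia.
Qed.

(* The position in w (counted from 1) of the v-th letter of mask m w. *)
Definition masked_index (m : bitseq) (v : nat) : nat :=
  (nth 0 (mask m (iota 0 (size m))) v.-1).+1.

Lemma masked_index_mono w m : size m = size w ->
  {in gamma (mask m w) &, {mono masked_index m : a b / a < b}}.
Proof.
move=> size_m; have sorted_pos : sorted ltn (mask m (iota 0 (size m))).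
  by apply: sorted_mask; [exact: ltn_trans | exact: iota_ltn_sorted].
move=> a b; rewrite !mem_gamma size_mask // => a_range b_range; rewrite ltnS.
rewrite sorted_nth_ltnE // ?size_mask ?size_iota //; lia.
Qed.

Lemma gamma_mask w m : size m = size w ->
  filter (fun v => nth false m v.-1) (gamma w) = map (masked_index m) (gamma (mask m w)).
Proof.
move=> size_m; set P := mask m (iota 0 (size m)).
have P_sorted : sorted ltn P.
  by apply: sorted_mask; [exact: ltn_trans | exact: iota_ltn_sorted].
have size_P : size P = size (mask m w) by rewrite !size_mask ?size_iota.
have mask_w : mask m w = map (nth 0 w) P by rewrite map_mask size_m map_nth_iota0 // take_size.
have filter_iota : filter (nth false m) (iota 0 (size w)) = P.
  by rewrite filter_mask -size_m map_nth_iota0 // take_size.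
rewrite !gammaE filter_map filter_sort; [|exact: gamma_ord_total|exact: gamma_ord_trans].
have P_nth : P = map (nth 0 P) (iota 0 (size P)) by rewrite map_nth_iota0 // take_size.
rewrite (eq_filter (a2 := nth false m)) // filter_iota {1}P_nth.
rewrite (@sort_gamma_ord_map (mask m w)) -?map_comp size_P; first exact: eq_map.
move=> i j; rewrite !mem_iota /= => lt_i lt_j.
by rewrite /gamma_ord mask_w !(nth_map 0) ?sorted_nth_leqE ?size_P.
Qed.

Lemma contains_gamma w x : contains w x -> contains (gamma w) (gamma x).
Proof.
case=> _ [/subseqP[m size_m ->] /order_isoP mw_x].
exists (filter (fun v => nth false m v.-1) (gamma w)); split; first exact: filter_subseq.
apply/order_isoP; rewrite gamma_mask // -(gamma_lt_iso mw_x).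
by apply/lt_iso_map; [exact: masked_index_mono | exact: lt_iso_refl].
Qed.

Lemma contains_class_of_gamma w y : contains (gamma w) (gamma y) ->
  exists x, is_cayley x /\ gamma x = gamma y /\ contains w x.
Proof.
case=> u [u_sub /order_isoP u_iso].
(* Since gamma w is a permutation, u is a set of positions of w. *)
set m := [seq i.+1 \in u | i <- iota 0 (size w)].
have size_m : size m = size w by rewrite size_map size_iota.
have u_filter : u = filter (fun v => nth false m v.-1) (gamma w).
  have gw_uniq : uniq (gamma w) by rewrite (perm_uniq (gamma_perm w)) iota_uniq.
  rewrite {1}(subseq_uniqP gw_uniq u_sub); apply: eq_in_filter => v.
  rewrite mem_gamma => /andP[v_pos le_v]; have lt_v : v.-1 < size w by rewrite prednK.
  by rewrite (nth_map 0) ?size_iota // nth_iota // add0n prednK.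
rewrite gamma_mask // in u_filter; set z := mask m w in u_filter.
have gz_iso : lt_iso (gamma z) (gamma y).
  by apply/(lt_iso_map (gamma y) (masked_index_mono size_m)); rewrite -u_filter.
have gz : gamma z = gamma y.
  apply: (perm_lt_iso_eq _ (gamma_perm y) gz_iso).
  by rewrite -(size_gamma y) -gz_iso.1 size_gamma gamma_perm.
exists (std z); split; first exact: std_cayley.
split; first by rewrite -gz; apply/gamma_lt_iso/std_lt_iso.
by exists z; split; [exact: mask_subseq | apply/order_isoP/lt_iso_sym/std_lt_iso].
Qed.

Lemma gamma_eq_sorted w q : perm_eq q (iota 1 (size w)) ->
  sorted (relpre predn (gamma_ord w)) q -> gamma w = q.
Proof.
move=> q_perm q_sorted.
have q_pos : all (leq 1) q by apply/allP => v; rewrite (perm_mem q_perm) mem_iota => /andP[].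
transitivity (map S (map predn q)); last first.
  by rewrite -map_comp map_id_in // => v /(allP q_pos); case: v.
rewrite gammaE; congr map.
apply: (sorted_eq (@gamma_ord_trans w) (@gamma_ord_anti w)).
- exact: sort_sorted (@gamma_ord_total w) _.
- by rewrite sorted_map.
- rewrite perm_sort; move: q_perm; rewrite iota1E => /(perm_map predn).
  by rewrite -map_comp map_id perm_sym.
Qed.

(* The word below takes the value g j at position p(j); eta p and perm_inv p
   are of this form. *)
Lemma gamma_comp_perm_inv p (g : nat -> nat) : is_perm p ->
  (forall j, j.+1 < size p ->
     (g j.+1 < g j.+2) || (g j.+1 == g j.+2) && (nth 0 p j.+1 <= nth 0 p j)) ->
  gamma [seq g (index v p).+1 | v <- iota 1 (size p)] = p.
Proof.
move=> /is_permP p_perm g_sorted; have p_uniq : uniq p by rewrite (perm_uniq p_perm) iota_uniq.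
have p_range j : j < size p -> 0 < nth 0 p j <= size p.
  by move=> lt_j; have := mem_nth 0 lt_j; rewrite (perm_mem p_perm) mem_iota add1n ltnS.
have nth_w j : j < size p ->
    nth 0 [seq g (index v p).+1 | v <- iota 1 (size p)] (nth 0 p j).-1 = g j.+1.
  move=> lt_j; have /andP[pj_pos pj_le] := p_range j lt_j.
  have lt_pj : (nth 0 p j).-1 < size p by rewrite prednK.
  by rewrite (nth_map 0) ?size_iota ?nth_iota // add1n prednK // index_uniq.
apply: gamma_eq_sorted; first by rewrite size_map size_iota.
apply/(sortedP 0) => j lt_j; rewrite /relpre /gamma_ord /= !nth_w //; last exact: ltnW.
have := p_range j (ltnW lt_j); have := p_range j.+1 lt_j; have := g_sorted j lt_j; lia.
Qed.

Lemma upsilonS p j : 0 < j -> upsilon p j.+1 = upsilon p j + eta_active p j.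
Proof.
case: j => // j _.
rewrite /upsilon !succnK -[j.+1]addn1 iotaD count_cat /= (addnC 1 j); lia.
Qed.

Lemma gamma_eta p : is_perm p -> gamma (eta p) = p.
Proof.
move=> p_is_perm; apply: gamma_comp_perm_inv => // j lt_j.
rewrite (@upsilonS p j.+1) //; case: (boolP (eta_active p j.+1)) => [_|].
  by rewrite addn1 ltnSn.
by rewrite /eta_active lt_j addn0 ltnn eqxx /= => /norP[_]; rewrite -leqNgt.
Qed.

Lemma gamma_perm_inv s : is_perm s -> gamma (perm_inv s) = s.
Proof. by move=> s_is_perm; apply: (@gamma_comp_perm_inv s id) => // j _; rewrite ltnSn. Qed.

Lemma gamma_img_Xbr y p : gamma_img (Xbr y) p <-> Sav (gamma y) p.
Proof.
split=> [[w [[_ w_avoids] <-]] | [p_is_perm p_avoids]].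
  split=> [|/contains_class_of_gamma[x [x_cayley [gx_gy w_x]]]]; first exact: gamma_is_perm.
  exact: w_avoids x_cayley gx_gy w_x.
exists (eta p); split; last exact: gamma_eta.
split=> [|x _ gx_gy /contains_gamma]; first by exists p.
by rewrite gamma_eta // gx_gy.
Qed.

Theorem theorem7p2 :
  (forall sigma : seq nat, is_perm sigma ->
     forall p : seq nat, Sav sigma p <-> gamma_img (Xbr (perm_inv sigma)) p) /\
  (forall y : seq nat, is_cayley y ->
     forall p : seq nat, gamma_img (Xbr y) p <-> Sav (gamma y) p).
Proof.
split=> [sigma sigma_perm p | y _ p]; last exact: gamma_img_Xbr.
by rewrite gamma_img_Xbr gamma_perm_inv.
Qed.
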